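(* Let $X$ be an algebraic K3 surface of Picard number $9$ carrying an even set of eight disjoint smooth rational curves $N_1,\dots,N_8$, and let $N\subseteq NS(X)$ be the minimal primitive sublattice containing $N_1,\dots,N_8$ (it is generated by the $N_i$ and $\hat N=\frac12(N_1+\dots+N_8)$). Let $L$ be a generator of the orthogonal complement $N^{\perp}\subseteq NS(X)$ with $L^2>0$, let $d$ be the positive integer with $L^2=2d$, and put $\mathcal{L}_{2d}=\mathbb{Z}L\oplus N$. Then: (1) if $L^2\equiv 2 \pmod 4$, then $NS(X)=\mathcal{L}_{2d}$; (2) if $L^2\equiv 0\pmod 4$, then either $NS(X)=\mathcal{L}_{2d}$, or $NS(X)=\mathcal{L}'_{2d}$, where $\mathcal{L}'_{2d}$ is the lattice generated by $\mathcal{L}_{2d}$ and a class $\frac{L+v}{2}$ with $v\in N$ satisfying: $v^2\in 4\mathbb{Z}$; $v\cdot N_i\in 2\mathbb{Z}$ for all $i$, and $v/2\notin N$; and $L^2\equiv -v^2 \pmod 8$.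
   Context: All varieties are over $\mathbb{C}$. A set of disjoint smooth rational curves $N_1,\dots,N_m$ on a smooth surface $X$ is an even set if there exists $\delta\in \mathrm{Pic}(X)$ with $N_1+\dots+N_m\sim 2\delta$ (linear equivalence). The Nikulin lattice is the even negative definite lattice $N$ of rank $8$ generated by classes $N_1,\dots,N_8$ and $\hat N=\frac12\sum_{i=1}^8 N_i$, with bilinear form determined by $N_i\cdot N_j=-2\delta_{ij}$; for an even set of eight disjoint smooth rational curves on a K3 surface, the minimal primitive sublattice of $NS(X)$ containing them is isometric to this lattice. $NS(X)$ denotes the Néron–Severi lattice with its intersection form. *)

(* The Neron-Severi lattice NS(X) of a K3 surface of Picard
   number 9 is modelled as Z^9 = 'rV[int]_9 with an integral Gram matrix G. *)
From HB Require Import structures.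
From mathcomp Require Import all_boot all_order all_algebra.
Set Implicit Arguments. Unset Strict Implicit. Unset Printing Implicit Defensive.
Import Order.TTheory GRing.Theory Num.Theory.
Local Open Scope ring_scope.

Definition lat := 'rV[int]_9.

Definition nsform (G : 'M[int]_9) (x y : lat) : int := (x *m G *m y^T) 0 0.

Definition even_lattice (G : 'M[int]_9) : Prop :=
  [/\ G^T = G, \det G != 0 & forall x : lat, (2 %| nsform G x x)%Z].

Definition in_span8 (N : 'I_8 -> lat) (x : lat) : Prop :=
  exists c : 'I_8 -> int, x = \sum_(i < 8) c i *: N i.

Definition in_Nik (N : 'I_8 -> lat) (hatN : lat) (x : lat) : Prop :=
  exists (c : 'I_8 -> int) (e : int), x = \sum_(i < 8) c i *: N i + e *: hatN.

Definition in_L2d (N : 'I_8 -> lat) (hatN L : lat) (x : lat) : Prop :=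
  exists (a : int) (y : lat), in_Nik N hatN y /\ x = a *: L + y.

(* x lies in the lattice generated by L_{2d} and w (= (L+v)/2) *)
Definition in_L2d' (N : 'I_8 -> lat) (hatN L w : lat) (x : lat) : Prop :=
  exists (b : int) (y : lat), in_L2d N hatN L y /\ x = y + b *: w.

From HB Require Import structures.
From mathcomp Require Import all_boot all_order all_algebra.
From mathcomp Require Import zify ring.
From Stdlib Require Import Classical.
Import Order.TTheory GRing.Theory Num.Theory.
Local Open Scope ring_scope.

(* For x in NS(X), the class 2x + sum_i (x.N_i) N_i is orthogonal to every N_i,
   hence equals a L for an integer a. If a is even, primitivity of N puts x in
   L_2d; since the parity of a is additive, L_2d has index at most 2, and an x0
   with a = 2q + 1 gives w = x0 - q L with 2w = L + v, v = -sum_i (x0.N_i) N_i.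
   Squaring, 4 x0^2 = a^2 L^2 + v^2 with v^2 = -2 sum_i (x0.N_i)^2; as x0^2 is
   even, a^2 = 1 mod 8 and sum_i x0.N_i = 2 hatN.x0 is even, this yields
   L^2 = -v^2 mod 8 and 4 | v^2, so odd classes force 4 | L^2. Finally v/2 is
   not in NS(X), for otherwise L would be divisible by 2. *)

Section IntersectionForm.
Variable G : 'M[int]_9.

Lemma nsformDl x y z : nsform G (x + y) z = nsform G x z + nsform G y z.
Proof. by rewrite /nsform !mulmxDl mxE. Qed.

Lemma nsformZl (a : int) x z : nsform G (a *: x) z = a * nsform G x z.
Proof. by rewrite /nsform -!scalemxAl mxE. Qed.

Lemma nsformNl x z : nsform G (- x) z = - nsform G x z.
Proof. by rewrite -scaleN1r nsformZl mulN1r. Qed.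

Lemma nsformBl x y z : nsform G (x - y) z = nsform G x z - nsform G y z.
Proof. by rewrite nsformDl nsformNl. Qed.

Lemma nsformMnl x z n : nsform G (x *+ n) z = nsform G x z *+ n.
Proof. by rewrite -scaler_nat nsformZl mulr_natl. Qed.

Lemma nsform_suml (I : Type) (r : seq I) (P : pred I) (F : I -> lat) z :
  nsform G (\sum_(i <- r | P i) F i) z = \sum_(i <- r | P i) nsform G (F i) z.
Proof.
apply: (big_morph (nsform G ^~ z)) => [x y|]; first exact: nsformDl.
by rewrite /nsform !mul0mx mxE.
Qed.

Hypothesis G_sym : G^T = G.

Lemma nsformC x y : nsform G x y = nsform G y x.
Proof.
rewrite /nsform -[in RHS](trmxK (y *m G *m x^T)) [in RHS]mxE.
by rewrite !trmx_mul trmxK G_sym mulmxA.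
Qed.

Lemma nsform_orthD x y :
  nsform G x y = 0 -> nsform G (x + y) (x + y) = nsform G x x + nsform G y y.
Proof.
move=> xy0; rewrite !nsformDl (nsformC x) (nsformC y) !nsformDl xy0 nsformC xy0.
by rewrite !addr0 add0r.
Qed.

End IntersectionForm.

Section NikulinOverlattice.
Variables (G : 'M[int]_9) (N : 'I_8 -> lat) (hatN L : lat).
Hypothesis G_sym : G^T = G.
Hypothesis G_even : forall x : lat, (2 %| nsform G x x)%Z.
Hypothesis N_gram :
  forall i j : 'I_8, nsform G (N i) (N j) = if i == j then -2 else 0.
Hypothesis sumN : \sum_(i < 8) N i = hatN *+ 2.
Hypothesis N_primitive :
  forall (k : int) (x : lat), 0 < k -> in_span8 N (k *: x) -> in_Nik N hatN x.
Hypothesis L_orthoN : forall i, nsform G L (N i) = 0.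
Hypothesis L_gen :
  forall x : lat, (forall i, nsform G x (N i) = 0) -> exists a : int, x = a *: L.
Hypothesis L_pos : 0 < nsform G L L.

Definition comb (c : 'I_8 -> int) : lat := \sum_(i < 8) c i *: N i.

(* The orthogonal projection of x to N (x) Q is (1/2) comb (coefN x). *)
Definition coefN (x : lat) (i : 'I_8) : int := - nsform G x (N i).

Lemma combB c c' : comb (fun i => c i - c' i) = comb c - comb c'.
Proof. by rewrite /comb -sumrB; apply: eq_bigr => i _; rewrite scalerBl. Qed.

Lemma nsform_combN c j : nsform G (comb c) (N j) = -2 * c j.
Proof.
rewrite nsform_suml (bigD1 j) //= nsformZl N_gram eqxx big1 ?addr0 1?mulrC //.
by move=> i /negbTE ij; rewrite nsformZl N_gram ij mulr0.
Qed.

Lemma nsform_combL c : nsform G (comb c) L = 0.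
Proof.
by rewrite nsform_suml big1 // => i _; rewrite nsformZl nsformC // L_orthoN mulr0.
Qed.

Lemma nsform_comb c : nsform G (comb c) (comb c) = -2 * \sum_(i < 8) c i ^+ 2.
Proof.
rewrite nsform_suml mulr_sumr; apply: eq_bigr => i _.
by rewrite nsformZl nsformC // nsform_combN mulrCA.
Qed.

Lemma twice_decomp x : exists a : int, x *+ 2 = a *: L + comb (coefN x).
Proof.
have [a xE] : exists a : int, x *+ 2 - comb (coefN x) = a *: L.
  by apply: L_gen => j; rewrite nsformBl nsformMnl nsform_combN /coefN; lia.
by exists a; rewrite -xE subrK.
Qed.

Lemma in_L2d_twice y (q : int) c :
  y *+ 2 = (q * 2) *: L + comb c -> in_L2d N hatN L y.
Proof.
move=> yE; exists q, (y - q *: L); split; last by rewrite addrC subrK.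
apply: (N_primitive 2 (y - q *: L)) => //; exists c.
by rewrite scalerBr scaler_nat yE scalerA mulrC addrC addKr.
Qed.

Lemma dvdz_sqr_sub (c : int) : (2 %| c ^+ 2 - c)%Z.
Proof.
apply/dvdzP; have [q [->|->]] : exists q, c = q * 2 \/ c = q * 2 + 1.
  by exists (c %/ 2)%Z; lia.
- by exists (q * (q * 2 - 1)); ring.
- by exists ((q * 2 + 1) * q); ring.
Qed.

Lemma sum_coefN_sqr_even x : (2 %| \sum_(i < 8) coefN x i ^+ 2)%Z.
Proof.
have sum_even : (2 %| \sum_(i < 8) coefN x i)%Z.
  apply/dvdzP; exists (- nsform G hatN x).
  rewrite /coefN sumrN; under eq_bigr do rewrite nsformC //.
  rewrite -nsform_suml sumN nsformMnl; lia.
rewrite -(subrK (\sum_i coefN x i) (\sum_i _)) -sumrB rpredD //.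
by apply: rpred_sum => i _; apply: dvdz_sqr_sub.
Qed.

Lemma nsform_twice x a : x *+ 2 = a *: L + comb (coefN x) ->
  nsform G x x * 4 = a ^+ 2 * nsform G L L - 2 * \sum_(i < 8) coefN x i ^+ 2.
Proof.
move=> xE.
have : nsform G (x *+ 2) (x *+ 2) = nsform G x x * 4.
  by rewrite nsformMnl nsformC // nsformMnl -mulrnA mulr_natr.
rewrite xE nsform_orthD //; last by rewrite nsformZl nsformC // nsform_combL mulr0.
by rewrite nsform_comb nsformZl nsformC // nsformZl mulrA -expr2 mulNr => <-.
Qed.

Lemma odd_class_mod8 x q : x *+ 2 = (q * 2 + 1) *: L + comb (coefN x) ->
  (nsform G L L = 2 * \sum_(i < 8) coefN x i ^+ 2 %[mod 8])%Z.
Proof.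
move=> /nsform_twice xxE.
have /dvdzP [k kE] := G_even x.
have /dvdzP [m mE] := dvdz_sqr_sub q.
have sqE : (q * 2 + 1) ^+ 2 = (m + q) * 8 + 1.
  rewrite (_ : (q * 2 + 1) ^+ 2 = (q ^+ 2 - q) * 4 + q * 8 + 1); last by ring.
  by rewrite mE; ring.
apply/eqP; rewrite eqz_mod_dvd; apply/dvdzP; exists (k - (m + q) * nsform G L L).
move: xxE; rewrite kE sqE; lia.
Qed.

Lemma L_not_twice x : x *+ 2 <> L.
Proof.
move=> xE.
have [b bE] : exists b : int, x = b *: L.
  by apply: L_gen => j; have := L_orthoN j; rewrite -xE nsformMnl; lia.
have := congr1 (nsform G ^~ L) xE; rewrite /= nsformMnl bE nsformZl => nE.
have /eqP : (b * 2 - 1) * nsform G L L = 0 by lia.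
by rewrite mulf_eq0 => /orP[] /eqP; lia.
Qed.

Lemma L2d_or_odd x : in_L2d N hatN L x \/
  exists q : int, x *+ 2 = (q * 2 + 1) *: L + comb (coefN x).
Proof.
have [a xE] := twice_decomp x.
have [q [aE|aE]] : exists q : int, a = q * 2 \/ a = q * 2 + 1.
  by exists (a %/ 2)%Z; lia.
- by left; apply: (in_L2d_twice _ q (coefN x)); rewrite -aE.
- by right; exists q; rewrite -aE.
Qed.

Section OddClass.
Variables (x0 : lat) (q0 : int).
Hypothesis x0_odd : x0 *+ 2 = (q0 * 2 + 1) *: L + comb (coefN x0).

Lemma odd_class_half : (x0 - q0 *: L) *+ 2 = L + comb (coefN x0).
Proof.
rewrite mulrnBl x0_odd scalerMnl -[q0 *+ 2]mulr_natr scalerDl scale1r -!addrA.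
by rewrite [L + (_ - _)]addrA addrC subrK.
Qed.

Lemma odd_class_generates x : in_L2d' N hatN L (x0 - q0 *: L) x.
Proof.
case: (L2d_or_odd x) => [xL2d|[q xE]]; first by exists 0, x; rewrite scale0r addr0.
exists 1, (x - (x0 - q0 *: L)); split; last by rewrite scale1r subrK.
apply: (in_L2d_twice _ q (fun i => coefN x i - coefN x0 i)).
rewrite combB mulrnBl odd_class_half xE scalerDl scale1r.
by rewrite addrAC addrKA addrAC addrA.
Qed.

Lemma odd_class_comb_not_twice u : comb (coefN x0) <> u *+ 2.
Proof.
move=> vE; apply: (L_not_twice (x0 - q0 *: L - u)).
by rewrite mulrnBl odd_class_half vE addrK.
Qed.

End OddClass.

Lemma NS_eq_L2d_of_mod4_2 :
  (nsform G L L %% 4)%Z = 2 -> forall x, in_L2d N hatN L x.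
Proof.
move=> n_mod4 x; have [//|[q /odd_class_mod8 nE]] := L2d_or_odd x.
have /dvdzP [s sE] := sum_coefN_sqr_even x.
by move: nE; rewrite sE => /eqP; rewrite eqz_mod_dvd => /dvdzP [k kE]; lia.
Qed.

Lemma NS_eq_L2d_or_index2 :
  (forall x : lat, in_L2d N hatN L x) \/
  (exists v w : lat,
     [/\ in_Nik N hatN v, w *+ 2 = L + v & forall x : lat, in_L2d' N hatN L w x] /\
     [/\ (4 %| nsform G v v)%Z,
         (forall i, (2 %| nsform G v (N i))%Z),
         ~ (exists u : lat, in_Nik N hatN u /\ v = u *+ 2)
       & (nsform G L L = - nsform G v v %[mod 8])%Z]).
Proof.
have [all_L2d|/not_all_ex_not [x0 x0_notin]] :=
  classic (forall x, in_L2d N hatN L x); first by left.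
have [//|[q0 x0_odd]] := L2d_or_odd x0.
right; exists (comb (coefN x0)), (x0 - q0 *: L); split; split.
- by exists (coefN x0), 0; rewrite scale0r addr0.
- exact: odd_class_half.
- exact: odd_class_generates.
- have /dvdzP [s sE] := sum_coefN_sqr_even x0.
  by rewrite nsform_comb sE; apply/dvdzP; exists (- s); lia.
- by move=> i; rewrite nsform_combN; apply/dvdzP; exists (- coefN x0 i); ring.
- by move=> [u [_ /(odd_class_comb_not_twice _ _ x0_odd)]].
- by rewrite nsform_comb mulNr opprK; exact: (odd_class_mod8 _ _ x0_odd).
Qed.

End NikulinOverlattice.

Theorem proposition3p2 (G : 'M[int]_9) (N : 'I_8 -> lat) (hatN L : lat) :
  (* NS(X): even nondegenerate lattice of rank 9 *)
  even_lattice G ->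
  (* classes of eight disjoint smooth rational curves *)
  (forall i j : 'I_8, nsform G (N i) (N j) = if i == j then -2 else 0) ->
  (* even set: N_1 + ... + N_8 = 2 hatN in NS(X) *)
  \sum_(i < 8) N i = hatN *+ 2 ->
  (* the minimal primitive sublattice containing the N_i is <N_i, hatN> *)
  (forall (k : int) (x : lat), 0 < k -> in_span8 N (k *: x) -> in_Nik N hatN x) ->
  (* L generates the orthogonal complement of N, and L^2 > 0 *)
  (forall i, nsform G L (N i) = 0) ->
  (forall x : lat, (forall i, nsform G x (N i) = 0) -> exists a : int, x = a *: L) ->
  0 < nsform G L L ->
  (* (1) *)
  (((nsform G L L %% 4)%Z = 2 -> forall x : lat, in_L2d N hatN L x) /\
  (* (2) *)
   ((nsform G L L %% 4)%Z = 0 ->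
      (forall x : lat, in_L2d N hatN L x) \/
      (exists v w : lat,
         [/\ in_Nik N hatN v, w *+ 2 = L + v & forall x : lat, in_L2d' N hatN L w x] /\
         [/\ (4 %| nsform G v v)%Z,
             (forall i, (2 %| nsform G v (N i))%Z),
             ~ (exists u : lat, in_Nik N hatN u /\ v = u *+ 2)
           & (nsform G L L = - nsform G v v %[mod 8])%Z]))).
Proof.
move=> [G_sym _ G_even] *.
by split=> [|_]; [apply: NS_eq_L2d_of_mod4_2 | apply: NS_eq_L2d_or_index2].
Qed.
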